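(* Let $M$ be the blow-up of $\mathbb{CP}_2$ at three non-collinear points, with Kähler cone $\mathcal K$. Then $\mathcal B(\Omega)<\tfrac14$ for every $\Omega\in\mathcal K$.
   Context: For a Kähler class $\Omega$ on a toric surface with maximal torus $T^2$, define $\mathcal B(\Omega)=\frac{1}{32\pi^2}\|\mathfrak F(\Omega)\|^2$. This is computed as follows. Let $x,y$ be the Hamiltonians of the torus action for a $T^2$-invariant Kähler metric in $\Omega$. Let $\mathfrak F_1=\int_M x(s-s_0)\,d\mu$ and $\mathfrak F_2=\int_M y(s-s_0)\,d\mu$, with $s_0$ the average scalar curvature. Let $A=\int(x-x_0)^2d\mu$, $B=\int(y-y_0)^2d\mu$, $C=\int(x-x_0)(y-y_0)d\mu$, with $x_0,y_0$ the averages. All of these depend only on $\Omega$. Then $$\mathcal B(\Omega)=\frac{1}{32\pi^2}\,\frac{B\mathfrak F_1^2-2C\mathfrak F_1\mathfrak F_2+A\mathfrak F_2^2}{AB-C^2}.$$ If $\Omega$ contains an extremal Kähler metric, this equals $\frac{1}{32\pi^2}\int(s-s_0)^2\,d\mu$. *)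

From Stdlib Require Import Reals Lra ClassicalEpsilon.
Open Scope R_scope.

(* Total version of the Riemann integral: the Riemann integral of f on [a,b]
   when f is Riemann integrable there (the value does not depend on the
   integrability proof, RiemannInt_P5), and 0 otherwise. *)
Definition RInt (f : R -> R) (a b : R) : R :=
  match excluded_middle_informative (inhabited (Riemann_integrable f a b)) with
  | left H => RiemannInt (epsilon H (fun _ => True))
  | right _ => 0
  end.

(* Moment polygon of a T^2-invariant Kaehler class on the blow-up M of CP^2
   at three non-collinear (torus-fixed) points.  Writing
     Omega = 2 pi (a H - b1 E1 - b2 E2 - b3 E3),
   the Kaehler cone is  b1,b2,b3 > 0  and  a > bi + bj  (i <> j), i.e. Omega
   is positive on the six (-1)-curves E_i and H - E_i - E_j.  The moment
   polygon is the hexagon obtained from the triangle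
     {x >= 0, y >= 0, x + y <= a}
   by cutting the corners: x + y >= b1, x <= a - b2, y <= a - b3.          *)

Definition kahler_cone (a b1 b2 b3 : R) : Prop :=
  0 < b1 /\ 0 < b2 /\ 0 < b3 /\
  b1 + b2 < a /\ b1 + b3 < a /\ b2 + b3 < a.

Definition hex_area_int (a b1 b2 b3 : R) (f : R -> R -> R) : R :=
  RInt (fun x => RInt (fun y => f x y) (Rmax 0 (b1 - x)) (Rmin (a - b3) (a - x)))
       0 (a - b2).

(* Integral over the boundary of the hexagon against the standard boundary
   measure d sigma (on each edge, Lebesgue length divided by the Euclidean
   length of the primitive normal vector). *)
Definition hex_bdry_int (a b1 b2 b3 : R) (f : R -> R -> R) : R :=
    RInt (fun x => f x 0) b1 (a - b2)
  + RInt (fun y => f (a - b2) y) 0 b2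
  + RInt (fun x => f x (a - x)) b3 (a - b2)
  + RInt (fun x => f x (a - b3)) 0 b3
  + RInt (fun y => f 0 y) b1 (a - b3)
  + RInt (fun x => f x (b1 - x)) 0 b1.

(* Integrals over M of T^2-invariant functions f(x,y) of the Hamiltonians,
   for the Kaehler class with parameters (a,b1,b2,b3):
     int_M f d mu        = (2 pi)^2 int_P f dx dy,
     int_M s f d mu      = 2 (2 pi)^2 int_{dP} f d sigma
   (s = Riemannian scalar curvature, d mu = omega^2/2; the second identity is
   Donaldson's integration by parts, valid for f affine, which is all that is
   used: f = 1, x, y). *)
Definition int_mu (a b1 b2 b3 : R) (f : R -> R -> R) : R :=
  (2 * PI) ^ 2 * hex_area_int a b1 b2 b3 f.
Definition int_s_mu (a b1 b2 b3 : R) (f : R -> R -> R) : R :=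
  2 * (2 * PI) ^ 2 * hex_bdry_int a b1 b2 b3 f.

Definition volume a b1 b2 b3 := int_mu a b1 b2 b3 (fun _ _ => 1).
Definition s0 a b1 b2 b3 := int_s_mu a b1 b2 b3 (fun _ _ => 1) / volume a b1 b2 b3.
Definition x0 a b1 b2 b3 := int_mu a b1 b2 b3 (fun x _ => x) / volume a b1 b2 b3.
Definition y0 a b1 b2 b3 := int_mu a b1 b2 b3 (fun _ y => y) / volume a b1 b2 b3.

Definition Fut1 a b1 b2 b3 :=
  int_s_mu a b1 b2 b3 (fun x _ => x) - s0 a b1 b2 b3 * int_mu a b1 b2 b3 (fun x _ => x).
Definition Fut2 a b1 b2 b3 :=
  int_s_mu a b1 b2 b3 (fun _ y => y) - s0 a b1 b2 b3 * int_mu a b1 b2 b3 (fun _ y => y).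

Definition Agram a b1 b2 b3 :=
  int_mu a b1 b2 b3 (fun x _ => (x - x0 a b1 b2 b3) ^ 2).
Definition Bgram a b1 b2 b3 :=
  int_mu a b1 b2 b3 (fun _ y => (y - y0 a b1 b2 b3) ^ 2).
Definition Cgram a b1 b2 b3 :=
  int_mu a b1 b2 b3 (fun x y => (x - x0 a b1 b2 b3) * (y - y0 a b1 b2 b3)).

(* B(Omega) = (1/32 pi^2) ||F(Omega)||^2 *)
Definition calB (a b1 b2 b3 : R) : R :=
  let A := Agram a b1 b2 b3 in let B := Bgram a b1 b2 b3 in
  let C := Cgram a b1 b2 b3 in
  let F1 := Fut1 a b1 b2 b3 in let F2 := Fut2 a b1 b2 b3 in
  / (32 * PI ^ 2) * ((B * F1 ^ 2 - 2 * C * F1 * F2 + A * F2 ^ 2) / (A * B - C ^ 2)).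

From Pilot Require Import Defs.
From Stdlib Require Import Reals Lra ClassicalEpsilon FunctionalExtensionality.
From Coquelicot Require Import Coquelicot.
Open Scope R_scope.

(* All ingredients of B are integrals over the moment hexagon of polynomials of
   degree at most two, or integrals over its boundary of affine functions, hence
   polynomials in (a, b1, b2, b3).  With V the area, D = V^2 (AB - C^2) / (2 pi)^4 and
   Q the corresponding quadratic form in the Futaki invariants, B = Q / (2 V D), so
   B < 1/4 amounts to V D - 2 Q > 0.  The symmetries of the triangle preserve the
   hexagon and permute b1, b2, b3, so one may assume b1 >= b2 >= b3; then, writing
   b3 = p, b2 = p + q, b1 = p + q + r, a = b1 + b2 + s with p > 0 and q, r, s >= 0,
   the polynomials V, D and V D - 2 Q expand with nonnegative coefficients and a
   positive pure power of p. *)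

Lemma RInt_of_is_RInt (f : R -> R) (u v l : R) : is_RInt f u v l -> Defs.RInt f u v = l.
Proof.
  intros Hf.
  unfold Defs.RInt.
  destruct excluded_middle_informative as [Hpr | Hnot].
  - rewrite <- RInt_Reals. exact (is_RInt_unique f u v l Hf).
  - exfalso. apply Hnot. constructor. apply ex_RInt_Reals_0. now exists l.
Qed.

Lemma is_RInt_of_primitive (g G : R -> R) (u v : R) :
  (forall t, is_derive G t (g t)) -> (forall t, ex_derive g t) ->
  is_RInt g u v (G v - G u).
Proof.
  intros HG Hg.
  apply (is_RInt_derive G g); intros t _; [apply HG |].
  apply (ex_derive_continuous g), Hg.
Qed.

Lemma RInt_quadratic (g : R -> R) (al be ga u v : R) :
  (forall t, g t = al + be * t + ga * t ^ 2) ->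
  Defs.RInt g u v = al * (v - u) + be * (v ^ 2 - u ^ 2) / 2 + ga * (v ^ 3 - u ^ 3) / 3.
Proof.
  intros Hg. apply RInt_of_is_RInt.
  replace g with (fun t => al + be * t + ga * t ^ 2) by (extensionality t; now rewrite Hg).
  set (G := fun t => al * t + be * t ^ 2 / 2 + ga * t ^ 3 / 3).
  replace (al * (v - u) + _ + _) with (G v - G u) by (unfold G; field).
  apply is_RInt_of_primitive; intros t; unfold G; auto_derive; auto; field.
Qed.

Section QuadraticIntegrand.

Variables c0 c1 c2 c3 c4 c5 : R.

Definition quad (x y : R) : R := c0 + c1 * x + c2 * y + c3 * x ^ 2 + c4 * y ^ 2 + c5 * x * y.

(* [fiber_prim x y] is the integral of [quad x] over [0, y]; [line_prim al be] is a
   primitive of [x |-> fiber_prim x (al + be * x)]. *)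
Definition fiber_prim (x y : R) : R :=
  (c0 + c1 * x + c3 * x ^ 2) * y + (c2 + c5 * x) * y ^ 2 / 2 + c4 * y ^ 3 / 3.

Definition line_prim (al be x : R) : R :=
    c0 * (al * x + be * x ^ 2 / 2) + c1 * (al * x ^ 2 / 2 + be * x ^ 3 / 3)
  + c3 * (al * x ^ 3 / 3 + be * x ^ 4 / 4)
  + c2 / 2 * (al ^ 2 * x + al * be * x ^ 2 + be ^ 2 * x ^ 3 / 3)
  + c5 / 2 * (al ^ 2 * x ^ 2 / 2 + 2 * al * be * x ^ 3 / 3 + be ^ 2 * x ^ 4 / 4)
  + c4 / 3 * (al ^ 3 * x + 3 * al ^ 2 * be * x ^ 2 / 2 + al * be ^ 2 * x ^ 3 + be ^ 3 * x ^ 4 / 4).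

Lemma RInt_quad_fiber (x u v : R) :
  Defs.RInt (fun y => quad x y) u v = fiber_prim x v - fiber_prim x u.
Proof.
  rewrite (RInt_quadratic _ (c0 + c1 * x + c3 * x ^ 2) (c2 + c5 * x) c4).
  - unfold fiber_prim. field.
  - intros t. unfold quad. ring.
Qed.

Lemma is_RInt_fiber_prim_line (g : R -> R) (al be u v : R) :
  u <= v -> (forall x, u < x < v -> g x = fiber_prim x (al + be * x)) ->
  is_RInt g u v (line_prim al be v - line_prim al be u).
Proof.
  intros Huv Hg.
  apply (is_RInt_ext (fun x => fiber_prim x (al + be * x))).
  - rewrite Rmin_left, Rmax_right by exact Huv. intros x Hx. symmetry. now apply Hg.
  - apply is_RInt_of_primitive; intros t; unfold fiber_prim, line_prim; auto_derive; auto.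
    field.
Qed.

End QuadraticIntegrand.

Definition area (a b1 b2 b3 : R) : R := (a ^ 2 - b1 ^ 2 - b2 ^ 2 - b3 ^ 2) / 2.
Definition mom_x (a b1 b2 b3 : R) : R := (a ^ 3 - b1 ^ 3 + 2 * b2 ^ 3 - b3 ^ 3 - 3 * a * b2 ^ 2) / 6.
Definition mom_y (a b1 b2 b3 : R) : R := (a ^ 3 - b1 ^ 3 - b2 ^ 3 + 2 * b3 ^ 3 - 3 * a * b3 ^ 2) / 6.
Definition mom_xx (a b1 b2 b3 : R) : R :=
  (a ^ 4 - b1 ^ 4 - 3 * b2 ^ 4 - b3 ^ 4 + 8 * a * b2 ^ 3 - 6 * a ^ 2 * b2 ^ 2) / 12.
Definition mom_yy (a b1 b2 b3 : R) : R :=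
  (a ^ 4 - b1 ^ 4 - b2 ^ 4 - 3 * b3 ^ 4 + 8 * a * b3 ^ 3 - 6 * a ^ 2 * b3 ^ 2) / 12.
Definition mom_xy (a b1 b2 b3 : R) : R :=
  (a ^ 4 - b1 ^ 4 + 3 * b2 ^ 4 + 3 * b3 ^ 4 - 4 * a * b2 ^ 3 - 4 * a * b3 ^ 3) / 24.

Definition bdry_length (a b1 b2 b3 : R) : R := 3 * a - b1 - b2 - b3.
Definition bdry_mom_x (a b1 b2 b3 : R) : R := a * (a - b2).
Definition bdry_mom_y (a b1 b2 b3 : R) : R := a * (a - b3).

Lemma hex_area_int_quad (a b1 b2 b3 c0 c1 c2 c3 c4 c5 : R) (f : R -> R -> R) :
  kahler_cone a b1 b2 b3 -> (forall x y, f x y = quad c0 c1 c2 c3 c4 c5 x y) ->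
  hex_area_int a b1 b2 b3 f
  = c0 * area a b1 b2 b3 + c1 * mom_x a b1 b2 b3 + c2 * mom_y a b1 b2 b3
    + c3 * mom_xx a b1 b2 b3 + c4 * mom_yy a b1 b2 b3 + c5 * mom_xy a b1 b2 b3.
Proof.
  intros (h1 & h2 & h3 & h12 & h13 & h23) Hf.
  set (F := fiber_prim c0 c1 c2 c3 c4 c5).
  set (P := line_prim c0 c1 c2 c3 c4 c5).
  assert (Hfib : forall x, Defs.RInt (fun y => f x y) (Rmax 0 (b1 - x)) (Rmin (a - b3) (a - x))
                 = F x (Rmin (a - b3) (a - x)) - F x (Rmax 0 (b1 - x))).
  { intros x. unfold F. rewrite <- RInt_quad_fiber. f_equal. extensionality y. apply Hf. }
  unfold hex_area_int. rewrite (functional_extensionality _ _ Hfib).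
  assert (Htop : is_RInt (fun x => F x (Rmin (a - b3) (a - x))) 0 (a - b2)
                   ((P (a - b3) 0 b3 - P (a - b3) 0 0) + (P a (-1) (a - b2) - P a (-1) b3))).
  { apply (@is_RInt_Chasles R_NormedModule _ 0 b3 (a - b2)); apply is_RInt_fiber_prim_line; try lra;
      intros x Hx; unfold F; f_equal.
    - rewrite Rmin_left by lra. ring.
    - rewrite Rmin_right by lra. ring. }
  assert (Hbot : is_RInt (fun x => F x (Rmax 0 (b1 - x))) 0 (a - b2)
                   ((P b1 (-1) b1 - P b1 (-1) 0) + (P 0 0 (a - b2) - P 0 0 b1))).
  { apply (@is_RInt_Chasles R_NormedModule _ 0 b1 (a - b2)); apply is_RInt_fiber_prim_line; try lra;
      intros x Hx; unfold F; f_equal.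
    - rewrite Rmax_right by lra. ring.
    - rewrite Rmax_left by lra. ring. }
  erewrite RInt_of_is_RInt by exact (@is_RInt_minus R_NormedModule _ _ _ _ _ _ Htop Hbot).
  unfold P, line_prim, area, mom_x, mom_y, mom_xx, mom_yy, mom_xy, minus, plus, opp; simpl.
  field.
Qed.

Lemma hex_bdry_int_affine (a b1 b2 b3 d0 d1 d2 : R) (f : R -> R -> R) :
  (forall x y, f x y = d0 + d1 * x + d2 * y) ->
  hex_bdry_int a b1 b2 b3 f
  = d0 * bdry_length a b1 b2 b3 + d1 * bdry_mom_x a b1 b2 b3 + d2 * bdry_mom_y a b1 b2 b3.
Proof.
  intros Hf. unfold hex_bdry_int.
  rewrite (RInt_quadratic _ d0 d1 0 b1 (a - b2)),
    (RInt_quadratic _ (d0 + d1 * (a - b2)) d2 0 0 b2),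
    (RInt_quadratic _ (d0 + d2 * a) (d1 - d2) 0 b3 (a - b2)),
    (RInt_quadratic _ (d0 + d2 * (a - b3)) d1 0 0 b3),
    (RInt_quadratic _ d0 d2 0 b1 (a - b3)),
    (RInt_quadratic _ (d0 + d2 * b1) (d1 - d2) 0 0 b1)
    by (intros; rewrite Hf; ring).
  unfold bdry_length, bdry_mom_x, bdry_mom_y. field.
Qed.

Section HexagonInvariants.

Variables a b1 b2 b3 : R.

Definition gram_xx : R := area a b1 b2 b3 * mom_xx a b1 b2 b3 - mom_x a b1 b2 b3 ^ 2.
Definition gram_yy : R := area a b1 b2 b3 * mom_yy a b1 b2 b3 - mom_y a b1 b2 b3 ^ 2.
Definition gram_xy : R := area a b1 b2 b3 * mom_xy a b1 b2 b3 - mom_x a b1 b2 b3 * mom_y a b1 b2 b3.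
Definition gram_det : R := gram_xx * gram_yy - gram_xy ^ 2.

Definition fut_x : R := area a b1 b2 b3 * bdry_mom_x a b1 b2 b3 - bdry_length a b1 b2 b3 * mom_x a b1 b2 b3.
Definition fut_y : R := area a b1 b2 b3 * bdry_mom_y a b1 b2 b3 - bdry_length a b1 b2 b3 * mom_y a b1 b2 b3.
Definition fut_norm : R := gram_yy * fut_x ^ 2 - 2 * gram_xy * fut_x * fut_y + gram_xx * fut_y ^ 2.

Definition calB_margin : R := area a b1 b2 b3 * gram_det - 2 * fut_norm.

End HexagonInvariants.

Ltac unfold_invariants :=
  unfold calB_margin, fut_norm, fut_x, fut_y, gram_det, gram_xx, gram_yy, gram_xy,
    area, mom_x, mom_y, mom_xx, mom_yy, mom_xy, bdry_length, bdry_mom_x, bdry_mom_y.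

Lemma area_swap12 a b1 b2 b3 : area a b2 b1 b3 = area a b1 b2 b3.
Proof. unfold_invariants. field. Qed.
Lemma area_swap23 a b1 b2 b3 : area a b1 b3 b2 = area a b1 b2 b3.
Proof. unfold_invariants. field. Qed.
Lemma gram_det_swap12 a b1 b2 b3 : gram_det a b2 b1 b3 = gram_det a b1 b2 b3.
Proof. unfold_invariants. field. Qed.
Lemma gram_det_swap23 a b1 b2 b3 : gram_det a b1 b3 b2 = gram_det a b1 b2 b3.
Proof. unfold_invariants. field. Qed.
Lemma calB_margin_swap12 a b1 b2 b3 : calB_margin a b2 b1 b3 = calB_margin a b1 b2 b3.
Proof. unfold_invariants. field. Qed.
Lemma calB_margin_swap23 a b1 b2 b3 : calB_margin a b1 b3 b2 = calB_margin a b1 b2 b3.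
Proof. unfold_invariants. field. Qed.

Lemma kahler_cone_sym_ind (P : R -> R -> R -> R -> Prop) :
  (forall a b1 b2 b3, P a b2 b1 b3 -> P a b1 b2 b3) ->
  (forall a b1 b2 b3, P a b1 b3 b2 -> P a b1 b2 b3) ->
  (forall p q r s, 0 < p -> 0 <= q -> 0 <= r -> 0 <= s ->
     P (2 * p + 2 * q + r + s) (p + q + r) (p + q) p) ->
  forall a b1 b2 b3, kahler_cone a b1 b2 b3 -> P a b1 b2 b3.
Proof.
  intros H12 H23 Hchamber.
  assert (Hsorted : forall a b1 b2 b3,
             0 < b3 -> b3 <= b2 -> b2 <= b1 -> b1 + b2 < a -> P a b1 b2 b3).
  { intros a b1 b2 b3 H3 H32 H21 Ha.
    specialize (Hchamber b3 (b2 - b3) (b1 - b2) (a - b1 - b2)).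
    replace (2 * b3 + 2 * (b2 - b3) + (b1 - b2) + (a - b1 - b2)) with a in Hchamber by ring.
    replace (b3 + (b2 - b3) + (b1 - b2)) with b1 in Hchamber by ring.
    replace (b3 + (b2 - b3)) with b2 in Hchamber by ring.
    apply Hchamber; lra. }
  intros a b1 b2 b3 (h1 & h2 & h3 & h12 & h13 & h23).
  destruct (Rle_lt_dec b2 b1), (Rle_lt_dec b3 b2), (Rle_lt_dec b3 b1).
  - apply Hsorted; lra.
  - lra.
  - apply H23, Hsorted; lra.
  - apply H23, H12, Hsorted; lra.
  - apply H12, Hsorted; lra.
  - apply H12, H23, Hsorted; lra.
  - lra.
  - apply H12, H23, H12, Hsorted; lra.
Qed.

Lemma IZR_pos_nonneg (z : positive) : 0 <= IZR (Zpos z).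
Proof. apply (IZR_le 0). easy. Qed.
Lemma IZR_pos_pos (z : positive) : 0 < IZR (Zpos z).
Proof. apply (IZR_lt 0). easy. Qed.

(* Positivity of an expanded polynomial with nonnegative coefficients whose first
   monomial is strictly positive.  Numerals are matched before products: [apply]
   would otherwise unfold them into sums of ones. *)
Ltac nonneg_monomial :=
  lazymatch goal with
  | |- 0 <= IZR _ => apply IZR_pos_nonneg
  | |- 0 <= _ * _ => apply Rmult_le_pos; nonneg_monomial
  | |- 0 <= _ ^ _ => apply pow_le; nonneg_monomial
  | |- _ => first [assumption | now apply Rlt_le]
  end.
Ltac pos_monomial :=
  lazymatch goal with
  | |- 0 < IZR _ => apply IZR_pos_pos
  | |- 0 < _ * _ => apply Rmult_lt_0_compat; pos_monomial
  | |- 0 < _ ^ _ => apply pow_lt; pos_monomial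
  | |- _ => assumption
  end.
Ltac pos_polynomial :=
  lazymatch goal with
  | |- 0 < _ + _ => apply Rplus_lt_le_0_compat; [pos_polynomial | nonneg_monomial]
  | |- _ => pos_monomial
  end.
Ltac pos_expanded_fraction :=
  field_simplify; apply Rdiv_lt_0_compat; [pos_polynomial | pos_monomial].

Section Chamber.

Variables p q r s : R.
Hypotheses (Hp : 0 < p) (Hq : 0 <= q) (Hr : 0 <= r) (Hs : 0 <= s).

Lemma area_pos_chamber : 0 < area (2 * p + 2 * q + r + s) (p + q + r) (p + q) p.
Proof. unfold_invariants. pos_expanded_fraction. Qed.

Lemma gram_det_pos_chamber : 0 < gram_det (2 * p + 2 * q + r + s) (p + q + r) (p + q) p.
Proof. unfold_invariants. pos_expanded_fraction. Qed.

Lemma calB_margin_pos_chamber : 0 < calB_margin (2 * p + 2 * q + r + s) (p + q + r) (p + q) p.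
Proof. unfold_invariants. pos_expanded_fraction. Qed.

End Chamber.

Lemma hexagon_invariants_pos : forall a b1 b2 b3, kahler_cone a b1 b2 b3 ->
  0 < area a b1 b2 b3 /\ 0 < gram_det a b1 b2 b3 /\ 0 < calB_margin a b1 b2 b3.
Proof.
  apply kahler_cone_sym_ind.
  - intros a b1 b2 b3. now rewrite area_swap12, gram_det_swap12, calB_margin_swap12.
  - intros a b1 b2 b3. now rewrite area_swap23, gram_det_swap23, calB_margin_swap23.
  - intros p q r s Hp Hq Hr Hs.
    split; [| split]; [apply area_pos_chamber | apply gram_det_pos_chamber | apply calB_margin_pos_chamber]; assumption.
Qed.

Section ClassInvariants.

Variables a b1 b2 b3 : R.
Hypothesis Hcone : kahler_cone a b1 b2 b3.
Hypothesis Harea : area a b1 b2 b3 <> 0.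

Lemma int_mu_quad (c0 c1 c2 c3 c4 c5 : R) (f : R -> R -> R) :
  (forall x y, f x y = quad c0 c1 c2 c3 c4 c5 x y) ->
  int_mu a b1 b2 b3 f
  = (2 * PI) ^ 2 * (c0 * area a b1 b2 b3 + c1 * mom_x a b1 b2 b3 + c2 * mom_y a b1 b2 b3
      + c3 * mom_xx a b1 b2 b3 + c4 * mom_yy a b1 b2 b3 + c5 * mom_xy a b1 b2 b3).
Proof. intros Hf. unfold int_mu. now rewrite (hex_area_int_quad _ _ _ _ c0 c1 c2 c3 c4 c5 f). Qed.

Lemma volume_eq : volume a b1 b2 b3 = (2 * PI) ^ 2 * area a b1 b2 b3.
Proof. unfold volume. rewrite (int_mu_quad 1 0 0 0 0 0) by (intros; unfold quad; ring). ring. Qed.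

Lemma x0_eq : x0 a b1 b2 b3 = mom_x a b1 b2 b3 / area a b1 b2 b3.
Proof.
  unfold x0. rewrite volume_eq, (int_mu_quad 0 1 0 0 0 0) by (intros; unfold quad; ring).
  field. split; [exact Harea | apply PI_neq0].
Qed.

Lemma y0_eq : y0 a b1 b2 b3 = mom_y a b1 b2 b3 / area a b1 b2 b3.
Proof.
  unfold y0. rewrite volume_eq, (int_mu_quad 0 0 1 0 0 0) by (intros; unfold quad; ring).
  field. split; [exact Harea | apply PI_neq0].
Qed.

Lemma Agram_eq : Agram a b1 b2 b3 = (2 * PI) ^ 2 * gram_xx a b1 b2 b3 / area a b1 b2 b3.
Proof.
  unfold Agram. rewrite (int_mu_quad (x0 a b1 b2 b3 ^ 2) (-2 * x0 a b1 b2 b3) 0 1 0 0)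
    by (intros; unfold quad; ring).
  rewrite x0_eq. unfold gram_xx. field. exact Harea.
Qed.

Lemma Bgram_eq : Bgram a b1 b2 b3 = (2 * PI) ^ 2 * gram_yy a b1 b2 b3 / area a b1 b2 b3.
Proof.
  unfold Bgram. rewrite (int_mu_quad (y0 a b1 b2 b3 ^ 2) 0 (-2 * y0 a b1 b2 b3) 0 1 0)
    by (intros; unfold quad; ring).
  rewrite y0_eq. unfold gram_yy. field. exact Harea.
Qed.

Lemma Cgram_eq : Cgram a b1 b2 b3 = (2 * PI) ^ 2 * gram_xy a b1 b2 b3 / area a b1 b2 b3.
Proof.
  unfold Cgram.
  rewrite (int_mu_quad (x0 a b1 b2 b3 * y0 a b1 b2 b3) (- y0 a b1 b2 b3) (- x0 a b1 b2 b3) 0 0 1)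
    by (intros; unfold quad; ring).
  rewrite x0_eq, y0_eq. unfold gram_xy. field. exact Harea.
Qed.

Lemma s0_eq : s0 a b1 b2 b3 = 2 * bdry_length a b1 b2 b3 / area a b1 b2 b3.
Proof.
  unfold s0, int_s_mu. rewrite volume_eq, (hex_bdry_int_affine _ _ _ _ 1 0 0) by (intros; ring).
  field. split; [exact Harea | apply PI_neq0].
Qed.

Lemma Fut1_eq : Fut1 a b1 b2 b3 = 2 * (2 * PI) ^ 2 * fut_x a b1 b2 b3 / area a b1 b2 b3.
Proof.
  unfold Fut1, int_s_mu.
  rewrite s0_eq, (int_mu_quad 0 1 0 0 0 0), (hex_bdry_int_affine _ _ _ _ 0 1 0)
    by (intros; try unfold quad; ring).
  unfold fut_x. field. exact Harea.
Qed.

Lemma Fut2_eq : Fut2 a b1 b2 b3 = 2 * (2 * PI) ^ 2 * fut_y a b1 b2 b3 / area a b1 b2 b3.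
Proof.
  unfold Fut2, int_s_mu.
  rewrite s0_eq, (int_mu_quad 0 0 1 0 0 0), (hex_bdry_int_affine _ _ _ _ 0 0 1)
    by (intros; try unfold quad; ring).
  unfold fut_y. field. exact Harea.
Qed.

Lemma Gram_det_eq : Agram a b1 b2 b3 * Bgram a b1 b2 b3 - Cgram a b1 b2 b3 ^ 2
  = ((2 * PI) ^ 2 / area a b1 b2 b3) ^ 2 * gram_det a b1 b2 b3.
Proof. rewrite Agram_eq, Bgram_eq, Cgram_eq. unfold gram_det. field. exact Harea. Qed.

Lemma calB_eq : gram_det a b1 b2 b3 <> 0 ->
  calB a b1 b2 b3 = fut_norm a b1 b2 b3 / (2 * area a b1 b2 b3 * gram_det a b1 b2 b3).
Proof.
  intros Hdet. unfold calB. cbv zeta.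
  rewrite Gram_det_eq, Agram_eq, Bgram_eq, Cgram_eq, Fut1_eq, Fut2_eq.
  unfold fut_norm. field.
  repeat split; [exact Hdet | exact Harea | apply PI_neq0].
Qed.

End ClassInvariants.

Theorem lemmaB1 : forall a b1 b2 b3 : R,
  kahler_cone a b1 b2 b3 -> calB a b1 b2 b3 < 1 / 4.
Proof.
  intros a b1 b2 b3 Hcone.
  destruct (hexagon_invariants_pos a b1 b2 b3 Hcone) as (Harea & Hdet & Hmargin).
  rewrite (calB_eq a b1 b2 b3 Hcone) by lra.
  unfold calB_margin in Hmargin.
  apply Rlt_div_l; [| lra].
  apply Rmult_lt_0_compat; lra.
Qed.
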